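(* For every finite hyperplane arrangement $A$ in $\mathbb{R}^d$ and every $q\in\mathbb{R}^d$, $\mathrm{HTvD}(A,q)\ge \frac{1}{d}\mathrm{RD}(A,q)$.
   Context: Regression depth $\mathrm{RD}(A,q)$: the minimum, over all closed rays emanating from $q$, of the number of hyperplanes of $A$ intersected by or parallel to the ray (a hyperplane containing $q$ counts for every ray). Hyperplane Tverberg depth $\mathrm{HTvD}(A,q)$: the maximum $r$ such that $A$ can be partitioned into $r$ parts with $\mathrm{RD}(\text{part},q)\ge 1$ for each part. *)

From mathcomp Require Import all_boot all_order all_algebra.
From mathcomp Require Import boolp reals.
Set Implicit Arguments. Unset Strict Implicit. Unset Printing Implicit Defensive.
Import Order.TTheory GRing.Theory Num.Theory.
Local Open Scope ring_scope.

Section Depth.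
Variables (R : realType) (d : nat).

Definition dotv (u v : 'rV[R]_d) : R := \sum_(i < d) u 0 i * v 0 i.

(* A hyperplane is given by a pair (a, b) with a <> 0 : { x | a.x = b }. *)
Definition hyperplane := ('rV[R]_d * R)%type.

Definition on_hp (H : hyperplane) (x : 'rV[R]_d) : Prop := dotv H.1 x = H.2.

Definition ray_hits (H : hyperplane) (q v : 'rV[R]_d) : Prop :=
  (exists t : R, 0 <= t /\ on_hp H (q + t *: v)) \/ dotv H.1 v = 0.

Variable n : nat.
Variable A : 'I_n -> hyperplane.

Definition ray_count (P : {set 'I_n}) (q v : 'rV[R]_d) : nat :=
  #|[set i in P | `[< ray_hits (A i) q v >] ]|.

(* All counts are <= n, so the
   minimum over achieved values k <= n is the minimum over rays. *)
Definition RD (P : {set 'I_n}) (q : 'rV[R]_d) : nat :=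
  \big[minn/n]_(k < n.+1 |
     `[< exists v : 'rV[R]_d, v != 0 /\ ray_count P q v = k >]) k.

(* Hyperplane Tverberg depth: the largest r such that the arrangement can be
   partitioned into r parts (given by a labelling f : 'I_n -> 'I_r) each of
   regression depth >= 1.  Parts of depth >= 1 are nonempty, so r <= n. *)
Definition HTvD (q : 'rV[R]_d) : nat :=
  \big[maxn/0%N]_(r < n.+1 |
     `[< exists f : 'I_n -> 'I_r,
           forall j : 'I_r, (1 <= RD [set i | f i == j] q)%N >]) r.

End Depth.

From mathcomp Require Import all_boot all_order all_algebra.
From mathcomp Require Import boolp reals lra zify.
Import Order.TTheory GRing.Theory Num.Theory.
Set Implicit Arguments. Unset Strict Implicit. Unset Printing Implicit Defensive.
Local Open Scope ring_scope.

(* A ray from q in direction v meets (or is parallel to) the hyperplane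
   a.x = b exactly when 0 <= w.v, where w = (b - a.q) a.  So ray counts are
   counts of the vectors w_i lying in the closed half-space {w | 0 <= w.v},
   and a part has regression depth >= 1 iff no v makes all its w_i.v < 0.
   By Gordan's alternative this happens iff the w_i of the part are
   positively dependent.  A minimal positively dependent family T has all
   its proper subfamilies linearly independent, and from this one shows
   that every closed half-space bounded by a hyperplane through 0 contains
   at most d members of T.  Hence if every ray meets more than r*d
   hyperplanes, we can greedily peel off r+1 positively dependent parts
   (each removal costs every ray at most d hyperplanes).  With
   r = (RD - 1) %/ d this gives a partition into r+1 >= RD/d parts of
   depth >= 1. *)

Section DotProduct.
Variables (R : realType) (d : nat).
Implicit Types (u v : 'rV[R]_d).

Lemma dotvC u v : dotv u v = dotv v u.
Proof. by apply: eq_bigr => i _; rewrite mulrC. Qed.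

Lemma dotvDl u u' v : dotv (u + u') v = dotv u v + dotv u' v.
Proof. by rewrite /dotv -big_split; apply: eq_bigr => i _; rewrite mxE mulrDl. Qed.

Lemma dotvZl c u v : dotv (c *: u) v = c * dotv u v.
Proof. by rewrite /dotv mulr_sumr; apply: eq_bigr => i _; rewrite mxE mulrA. Qed.

Lemma dotvBl u u' v : dotv (u - u') v = dotv u v - dotv u' v.
Proof. by rewrite dotvDl -scaleN1r dotvZl mulN1r. Qed.

Lemma dotv0l v : dotv 0 v = 0.
Proof. by rewrite -(scale0r 0) dotvZl mul0r. Qed.

Lemma dotvDr u v v' : dotv u (v + v') = dotv u v + dotv u v'.
Proof. by rewrite dotvC dotvDl !(dotvC _ u). Qed.

Lemma dotvZr c u v : dotv u (c *: v) = c * dotv u v.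
Proof. by rewrite dotvC dotvZl dotvC. Qed.

Lemma dotvBr u v v' : dotv u (v - v') = dotv u v - dotv u v'.
Proof. by rewrite dotvC dotvBl !(dotvC _ u). Qed.

Lemma dotv_suml (I : finType) (P : pred I) (c : I -> R) (x : I -> 'rV[R]_d) v :
  dotv (\sum_(i | P i) c i *: x i) v = \sum_(i | P i) c i * dotv (x i) v.
Proof.
elim/big_rec2: _ => [|i y1 y2 _ <-]; first by rewrite dotv0l.
by rewrite dotvDl dotvZl.
Qed.

Lemma dotv_gt0 v : v != 0 -> 0 < dotv v v.
Proof.
move=> v_neq0; have sq_ge0 i : 0 <= v 0 i * v 0 i by rewrite -expr2 sqr_ge0.
rewrite lt_def sumr_ge0 ?andbT //; apply: contra v_neq0 => /eqP sum0.
apply/eqP/rowP => i; have := psumr_eq0P (fun i _ => sq_ge0 i) sum0 (i := i) isT.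
by rewrite -expr2 mxE => /eqP; rewrite sqrf_eq0 => /eqP.
Qed.

End DotProduct.

(* The ray from q in direction v hits H iff v lies in the closed half-space
   {v | 0 <= hp_normal H q . v}: the normal of H, oriented towards H. *)
Definition hp_normal (R : realType) (d : nat) (H : hyperplane R d) (q : 'rV[R]_d) :
  'rV[R]_d := (H.2 - dotv H.1 q) *: H.1.

Lemma ray_hitsE (R : realType) (d : nat) (H : hyperplane R d) (q v : 'rV[R]_d) :
  ray_hits H q v <-> 0 <= dotv (hp_normal H q) v.
Proof.
rewrite /ray_hits /on_hp /hp_normal dotvZl.
set c := H.2 - dotv H.1 q; set a := dotv H.1 v.
have a2_ge0 : 0 <= a * a by rewrite -expr2 sqr_ge0.
split=> [[[t [t_ge0 hit]]|a0]|ca_ge0].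
- have -> : c = t * a by rewrite /c -hit dotvDr dotvZr addrC addKr.
  by rewrite -mulrA mulr_ge0.
- by rewrite -/a a0 mulr0.
- have [a0|a_neq0] := eqVneq a 0; [by right | left].
  exists (c / a); split; last by rewrite dotvDr dotvZr -/a mulfVK // addrC subrK.
  have : 0 <= c * a / (a * a) by rewrite divr_ge0.
  by rewrite invfM mulrA mulfK.
Qed.

Section PositiveDependence.
Variables (R : realType) (d n : nat).
Implicit Types (S T : {set 'I_n}) (w : 'I_n -> 'rV[R]_d) (v : 'rV[R]_d).

Definition pos_dep S w : Prop :=
  exists lam : 'I_n -> R, [/\ forall i, i \in S -> 0 <= lam i,
    (exists2 i, i \in S & lam i != 0) & \sum_(i in S) lam i *: w i = 0].

Definition hit_count S w v : nat := #|[set i in S | 0 <= dotv (w i) v]|.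

Lemma hit_count_sub S S' w v : S \subset S' -> (hit_count S w v <= hit_count S' w v)%N.
Proof.
move=> sSS'; apply/subset_leq_card/subsetP => i.
by rewrite !inE => /andP[/(subsetP sSS') -> ->].
Qed.

Lemma pos_dep_sub S S' w : S \subset S' -> pos_dep S w -> pos_dep S' w.
Proof.
move=> sSS' [lam [lam_ge0 [i iS lam_i] lam_sum]].
exists (fun i => if i \in S then lam i else 0); split.
- by move=> j _; case: ifP => // /lam_ge0.
- by exists i; rewrite ?(subsetP sSS') ?iS.
rewrite (big_setID S) /= (setIidPr sSS') [X in _ + X]big1 ?addr0.
  by rewrite -[RHS]lam_sum; apply: eq_bigr => j ->.
by move=> j; rewrite inE => /andP[/negbTE -> _]; rewrite scale0r.
Qed.

Lemma pos_dep_zero S w m : m \in S -> w m = 0 -> pos_dep S w.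
Proof.
move=> mS wm0; apply: (pos_dep_sub (S := [set m])); first by rewrite sub1set.
exists (fun=> 1); split=> //; first by exists m; rewrite ?set11 ?oner_neq0.
by rewrite big_set1 wm0 scaler0.
Qed.

Lemma pos_dep_hit S w v : pos_dep S w -> (0 < hit_count S w v)%N.
Proof.
case=> lam [lam_ge0 [i iS lam_i] lam_sum]; rewrite card_gt0; apply/set0Pn.
apply/existsP; apply: contraT; rewrite negb_exists => /forallP miss.
have neg j : j \in S -> dotv (w j) v < 0.
  by move=> jS; have := miss j; rewrite !inE jS /= -ltNge.
have term_ge0 j : j \in S -> 0 <= lam j * - dotv (w j) v.
  by move=> jS; rewrite mulr_ge0 ?lam_ge0 // oppr_ge0 ltW ?neg.
have sum0 : \sum_(j in S) lam j * - dotv (w j) v = 0.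
  by under eq_bigr do rewrite mulrN; rewrite sumrN -dotv_suml lam_sum dotv0l oppr0.
have /eqP := psumr_eq0P term_ge0 sum0 iS.
by rewrite mulf_eq0 (negbTE lam_i) oppr_eq0 (lt_eqF (neg i iS)).
Qed.

(* Inductive step of Gordan's alternative, dependent case: if v strictly
   separates (w i)_(i in S) but not w m, a positive dependence of the
   projections of the w i along w m lifts to one of (w i)_(i in m |: S). *)
Lemma pos_dep_project S w m v :
  m \notin S -> (forall i, i \in S -> dotv (w i) v < 0) -> 0 <= dotv (w m) v ->
  pos_dep S (fun i => dotv (w m) v *: w i - dotv (w i) v *: w m) ->
  pos_dep (m |: S) w.
Proof.
move=> mS neg a_ge0 [mu [mu_ge0 [i iS mu_i] mu_sum]].
set a := dotv (w m) v in a_ge0 mu_sum.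
set sigma := \sum_(j in S) mu j * - dotv (w j) v.
have sigma_gt0 : 0 < sigma.
  have term_ge0 j : j \in S -> 0 <= mu j * - dotv (w j) v.
    by move=> jS; rewrite mulr_ge0 ?mu_ge0 // oppr_ge0 ltW ?neg.
  rewrite lt_def sumr_ge0 // andbT psumr_neq0 //; apply/hasP.
  exists i; first by rewrite mem_index_enum.
  by rewrite iS mulr_gt0 ?oppr_gt0 ?neg // lt_def mu_i mu_ge0.
exists (fun j => if j == m then sigma else a * mu j); split.
- move=> j; rewrite !inE; case: eqP => [_ _|_ /= jS]; first exact: ltW.
  by rewrite mulr_ge0 ?mu_ge0.
- by exists m; rewrite ?setU11 ?eqxx ?gt_eqF.
rewrite big_setU1 //= eqxx.
have split_sum : \sum_(j in S) mu j *: (a *: w j - dotv (w j) v *: w m) =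
                 \sum_(j in S) (a * mu j) *: w j + sigma *: w m.
  rewrite /sigma scaler_suml -big_split /=; apply: eq_bigr => j _.
  by rewrite scalerBr !scalerA mulrN scaleNr [mu j * a]mulrC.
rewrite (eq_bigr (fun j => (a * mu j) *: w j)); last first.
  by move=> j jS; rewrite ifN //; apply: contraNneq mS => <-.
by rewrite addrC -split_sum mu_sum.
Qed.

(* Inductive step of Gordan's alternative, separated case: if v strictly
   separates (w i)_(i in S) and is orthogonal to a nonzero w m, tilting
   v away from w m strictly separates all of (w i)_(i in m |: S). *)
Lemma strict_sep_tilt S w m v :
  w m != 0 -> dotv (w m) v = 0 -> (forall i, i \in S -> dotv (w i) v < 0) ->
  exists v', forall i, i \in m |: S -> dotv (w i) v' < 0.
Proof.
move=> wm_neq0 wm_v neg.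
pose K := 1 + \sum_(j in S) `|dotv (w j) (w m)| / - dotv (w j) v.
exists (K *: v - w m) => i; rewrite !inE dotvBr dotvZr.
case: eqP => [->|_ /= iS]; first by rewrite wm_v mulr0 sub0r oppr_lt0 dotv_gt0.
set c := dotv (w i) v; set b := dotv (w i) (w m).
have c_lt0 : c < 0 := neg i iS.
have K_ge : 1 + `|b| / - c <= K.
  rewrite lerD2l (big_setD1 i iS) /= lerDl sumr_ge0 // => j.
  by rewrite !inE => /andP[_ jS]; rewrite divr_ge0 // oppr_ge0 ltW ?neg.
have Kc_le : (1 + `|b| / - c) * - c <= K * - c by rewrite ler_wpM2r // oppr_ge0 ltW.
rewrite mulrDl mul1r divfK ?oppr_eq0 ?lt_eqF // mulrN in Kc_le.
have b_ge : - b <= `|b| by rewrite -normrN ler_norm.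
lra.
Qed.

Lemma gordan S w :
  pos_dep S w \/ exists v, forall i, i \in S -> dotv (w i) v < 0.
Proof.
have [k] := ubnP #|S|; elim: k S w => // k IH S w.
have [->|[m mS]] := set_0Vmem S; first by right; exists 0 => i; rewrite inE.
rewrite ltnS (cardsD1 m) mS add1n => cardS; rewrite -(setD1K mS).
set S' := S :\ m in cardS *; have mS' : m \notin S' by rewrite setD11.
have [dep|[v neg]] := IH S' w cardS.
  by left; apply: pos_dep_sub dep; apply: subsetUr.
have [wm0|wm_neq0] := eqVneq (w m) 0.
  by left; apply: pos_dep_zero wm0; rewrite setU11.
have [am_lt0|am_ge0] := ltP (dotv (w m) v) 0.
  right; exists v => i; rewrite in_setU1.
  by case: eqP => [-> _|_ /= iS]; last exact: neg.
set a := dotv (w m) v in am_ge0.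
have [dep|[v' neg']] := IH S' (fun i => a *: w i - dotv (w i) v *: w m) cardS.
  by left; apply: pos_dep_project dep.
right; pose v2 := a *: v' - dotv (w m) v' *: v.
apply: (@strict_sep_tilt _ _ _ v2 wm_neq0).
  by rewrite /v2 dotvBr !dotvZr mulrC subrr.
move=> i iS; have := neg' i iS.
by rewrite /v2 dotvBr !dotvZr dotvBl !dotvZl [X in _ - X]mulrC.
Qed.

Lemma hit_pos_dep S w : (0 < d)%N ->
  (forall v, v != 0 -> (0 < hit_count S w v)%N) -> pos_dep S w.
Proof.
move=> d_gt0 hit; have [//|[v neg]] := gordan S w.
have [u u_neq0 miss] : exists2 u, u != 0 & forall i, i \in S -> dotv (w i) u < 0.
  have [v0|] := eqVneq v 0; last by exists v.
  exists (const_mx 1).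
    by apply/eqP => /rowP /(_ (Ordinal d_gt0)); rewrite !mxE => /eqP; rewrite oner_eq0.
  by move=> i /neg; rewrite v0 dotvC dotv0l ltxx.
have := hit u u_neq0; rewrite card_gt0 => /set0Pn[i].
by rewrite inE => /andP[/miss]; rewrite ltNge => /negP.
Qed.

Lemma lin_dep S (x : 'I_n -> 'rV[R]_d) : (d < #|S|)%N ->
  exists mu : 'I_n -> R, [/\ forall i, i \notin S -> mu i = 0,
    (exists2 i, i \in S & mu i != 0) & \sum_(i in S) mu i *: x i = 0].
Proof.
move=> card_S; have [i0 i0S] : exists i0, i0 \in S.
  by apply/set0Pn; rewrite -card_gt0 (leq_ltn_trans _ card_S).
pose X : 'M[R]_(#|S|, d) := \matrix_(j, k) x (enum_val j) 0 k.
have : kermx X != 0.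
  by rewrite kermx_eq0 /row_free neq_ltn (leq_ltn_trans (rank_leq_col X)).
case/rowV0Pn => u /sub_kermxP uX u_neq0.
have [k0 u_k0] : exists k, u 0 k != 0.
  apply/existsP; apply: contraNT u_neq0 => /existsPn u0.
  by apply/eqP/rowP => k; rewrite mxE; apply/eqP/negPn/u0.
exists (fun i => if i \in S then u 0 (enum_rank_in i0S i) else 0); split.
- by move=> i /negbTE ->.
- by exists (enum_val k0); rewrite ?enum_valP // enum_valK_in.
rewrite big_enum_val /= -[RHS]uX mulmx_sum_row; apply: eq_bigr => j _.
by rewrite enum_valP enum_valK_in; congr (_ *: _); apply/rowP => k; rewrite !mxE.
Qed.

Definition min_pos_dep T w : Prop :=
  pos_dep T w /\ forall T', T' \proper T -> ~ pos_dep T' w.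

Lemma min_pos_dep_exists S w :
  pos_dep S w -> exists2 T : {set 'I_n}, T \subset S & min_pos_dep T w.
Proof.
move=> depS; pose P (T : {set 'I_n}) := (T \subset S) && `[< pos_dep T w >].
have PS : P S by rewrite /P subxx; apply/asboolP.
have [T /andP[TS /asboolP depT] Tmin] := arg_minnP (fun T : {set 'I_n} => #|T|) PS.
exists T => //; split=> // T' T'T depT'.
have PT' : P T' by rewrite /P (subset_trans (proper_sub T'T) TS); apply/asboolP.
by have := Tmin T' PT'; rewrite leqNgt proper_card.
Qed.

Lemma min_pos_dep_pos T w : min_pos_dep T w ->
  exists lam : 'I_n -> R,
    (forall t, t \in T -> 0 < lam t) /\ \sum_(t in T) lam t *: w t = 0.
Proof.
case=> [[lam [lam_ge0 [i0 i0T lam_i0] lam_sum]] Tmin].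
exists lam; split=> // t tT; rewrite lt_def lam_ge0 // andbT.
apply/negP => /eqP lam_t0; apply: (Tmin (T :\ t)); first exact: properD1.
exists lam; split.
- by move=> j /setD1P[_]; apply: lam_ge0.
- by exists i0; rewrite // !inE i0T andbT; apply: contraNneq lam_i0 => ->; rewrite lam_t0.
- by move: lam_sum; rewrite (big_setD1 t tT) /= lam_t0 scale0r add0r.
Qed.

(* Caratheodory-type reduction: subtracting from a strictly positive
   dependence lam the largest multiple of a linear dependence mu (positive
   somewhere, zero at t0) that keeps all coefficients nonnegative kills some
   coefficient but not the one at t0. *)
Lemma pos_dep_reduce T w (lam mu : 'I_n -> R) t0 i0 :
  (forall t, t \in T -> 0 < lam t) -> \sum_(t in T) lam t *: w t = 0 ->
  \sum_(t in T) mu t *: w t = 0 -> t0 \in T -> mu t0 = 0 ->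
  i0 \in T -> 0 < mu i0 ->
  exists2 ts, ts \in T & pos_dep (T :\ ts) w.
Proof.
move=> lam_gt0 lam_sum mu_sum t0T mu_t0 i0T mu_i0.
have [ts tsT ts_max] := @arg_maxP _ R _ i0 (mem T) (fun t => mu t / lam t) i0T.
set rho := mu ts / lam ts in ts_max.
have rho_gt0 : 0 < rho.
  by apply: lt_le_trans (ts_max _ i0T); rewrite divr_gt0 ?lam_gt0.
have mu_ts : mu ts != 0.
  by apply: contraTneq rho_gt0 => mu_ts0; rewrite /rho mu_ts0 mul0r ltxx.
have ts_neq_t0 : t0 != ts by apply: contraNneq mu_ts => <-; rewrite mu_t0.
exists ts => //; exists (fun t => lam t - mu t / rho); split.
- move=> t /setD1P[_ tT]; rewrite subr_ge0 ler_pdivrMr // mulrC.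
  by rewrite -ler_pdivrMr ?lam_gt0 //; apply: ts_max.
- by exists t0; rewrite ?inE ?ts_neq_t0 // mu_t0 mul0r subr0 gt_eqF ?lam_gt0.
have coef_ts : lam ts - mu ts / rho = 0.
  by rewrite /rho invf_div mulrC divfK ?subrr.
have := @big_setD1 _ 0 +%R _ ts T (fun t => (lam t - mu t / rho) *: w t) tsT.
rewrite /= coef_ts scale0r add0r => <-.
under eq_bigr do rewrite scalerBl mulrC -scalerA.
by rewrite sumrB -scaler_sumr lam_sum mu_sum scaler0 subrr.
Qed.

Lemma min_pos_dep_free T w (mu : 'I_n -> R) t0 :
  min_pos_dep T w -> t0 \in T -> mu t0 = 0 -> \sum_(t in T) mu t *: w t = 0 ->
  forall t, t \in T -> mu t = 0.
Proof.
move=> minT t0T mu_t0 mu_sum t tT; apply/eqP/negPn/negP => mu_t.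
have [lam [lam_gt0 lam_sum]] := min_pos_dep_pos minT.
suff [ts tsT] : exists2 ts, ts \in T & pos_dep (T :\ ts) w.
  by apply: minT.2; apply: properD1.
have [mu_gt0|mu_le0] := ltP 0 (mu t).
  exact: pos_dep_reduce lam_gt0 lam_sum mu_sum t0T mu_t0 tT mu_gt0.
apply: (@pos_dep_reduce _ _ lam (fun t => - mu t) t0 t) => //.
- by under eq_bigr do rewrite scaleNr; rewrite sumrN mu_sum oppr0.
- by rewrite mu_t0 oppr0.
- by rewrite oppr_gt0 lt_neqAle mu_t.
Qed.

Lemma min_pos_dep_card T w t0 : min_pos_dep T w -> t0 \in T -> (#|T :\ t0| <= d)%N.
Proof.
move=> minT t0T; rewrite leqNgt; apply/negP.
move=> /(lin_dep w)[mu [mu_out [i iT mu_i] mu_sum]].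
have mu_t0 : mu t0 = 0 by apply: mu_out; rewrite setD11.
have mu_sumT : \sum_(t in T) mu t *: w t = 0.
  by rewrite (big_setD1 t0 t0T) /= mu_t0 scale0r add0r.
case/setD1P: iT => _ iT; move/eqP: mu_i; apply.
exact: min_pos_dep_free minT t0T mu_t0 mu_sumT i iT.
Qed.

Lemma min_pos_dep_hits T w v : min_pos_dep T w -> v != 0 -> (hit_count T w v <= d)%N.
Proof.
move=> minT v_neq0; rewrite leqNgt; apply/negP => many.
set U := [set t in T | 0 <= dotv (w t) v] in many.
have UT : U \subset T by apply/subsetP => t; rewrite inE => /andP[].
have [t0 t0U] : exists t0, t0 \in U.
  by apply/set0Pn; rewrite -card_gt0 (leq_ltn_trans _ many).
have t0T := subsetP UT t0 t0U.
have UeT : U = T.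
  apply/eqP; rewrite eqEcard UT (cardsD1 t0 T) t0T add1n.
  exact: leq_ltn_trans (min_pos_dep_card minT t0T) many.
have [lam [lam_gt0 lam_sum]] := min_pos_dep_pos minT.
have dot0 t : t \in T -> dotv (w t) v = 0.
  have term_ge0 s : s \in T -> 0 <= lam s * dotv (w s) v.
    rewrite -{1}UeT /U inE => /andP[sT dot_ge0].
    by rewrite mulr_ge0 // ltW ?lam_gt0.
  have sum0 : \sum_(s in T) lam s * dotv (w s) v = 0.
    by rewrite -dotv_suml lam_sum dotv0l.
  move=> tT; have /eqP := psumr_eq0P term_ge0 sum0 tT.
  by rewrite mulf_eq0 gt_eqF ?lam_gt0 //= => /eqP.
pose x t := if t == t0 then v else w t.
have /(lin_dep x)[mu [_ [i iT mu_i] mu_sum]] : (d < #|T|)%N by rewrite -UeT.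
have mu_t0 : mu t0 = 0.
  have := congr1 (fun z => dotv z v) mu_sum; rewrite /= dotv_suml dotv0l.
  rewrite (big_setD1 t0 t0T) /= /x eqxx big1 ?addr0; last first.
    by move=> t /setD1P[/negbTE -> tT]; rewrite dot0 ?mulr0.
  by move/eqP; rewrite mulf_eq0 (gt_eqF (dotv_gt0 v_neq0)) orbF => /eqP.
have mu_sumw : \sum_(t in T) mu t *: w t = 0.
  rewrite -[RHS]mu_sum; apply: eq_bigr => t _; rewrite /x.
  by case: eqP => // ->; rewrite mu_t0 !scale0r.
move/eqP: mu_i; apply; exact: min_pos_dep_free minT t0T mu_t0 mu_sumw i iT.
Qed.

Lemma hit_count_split S S' w v :
  (hit_count S w v <= hit_count (S :\: S') w v + hit_count S' w v)%N.
Proof.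
rewrite /hit_count; apply: leq_trans (leq_card_setU _ _).
by apply/subset_leq_card/subsetP => i; rewrite !inE => /andP[-> ->]; rewrite !andbT orNb.
Qed.

(* Each step removes a minimal
   positive dependence, which costs every half-space at most d members. *)
Lemma greedy_partition (hd : (0 < d)%N) w r P :
  (forall v, v != 0 -> (r * d < hit_count P w v)%N) ->
  exists g : 'I_n -> 'I_r.+1, forall j v, v != 0 ->
    (0 < hit_count (P :&: [set i | g i == j]) w v)%N.
Proof.
elim: r P => [|r IH] P deep.
  exists (fun=> ord0) => j v /deep; rewrite (ord1 j).
  by rewrite (_ : [set _ | _] = setT) ?setIT //; apply/setP => i; rewrite !inE.
have depP : pos_dep P w by apply: hit_pos_dep => // v /deep; apply: leq_ltn_trans.
have [T TP minT] := min_pos_dep_exists depP.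
have [g rest_hit] : exists g : 'I_n -> 'I_r.+1, forall j v, v != 0 ->
    (0 < hit_count ((P :\: T) :&: [set i | g i == j]) w v)%N.
  apply: IH => v v_neq0; have := deep v v_neq0; rewrite mulSn.
  have := hit_count_split P T w v; have := min_pos_dep_hits minT v_neq0; lia.
exists (fun i => if i \in T then ord_max else widen_ord (leqnSn _) (g i)) => j v v_neq0.
have [->|j_neq] := eqVneq j ord_max.
  apply: leq_trans (pos_dep_hit v minT.1) (hit_count_sub _ _ _).
  by apply/subsetP => i iT; rewrite !inE iT eqxx (subsetP TP).
have j_lt : (j < r.+1)%N by rewrite ltn_neqAle -ltnS ltn_ord andbT -val_eqE in j_neq *.
apply: leq_trans (rest_hit (Ordinal j_lt) v v_neq0) (hit_count_sub _ _ _).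
apply/subsetP => i; rewrite !inE => /andP[/andP[iT ->] /eqP gi] /=.
by rewrite (negbTE iT) -val_eqE /= gi.
Qed.

End PositiveDependence.

Section Depth.
Variables (R : realType) (d n : nat) (A : 'I_n -> hyperplane R d) (q : 'rV[R]_d).
Implicit Types (P : {set 'I_n}) (v : 'rV[R]_d).

Lemma ray_count_hit_count P v :
  ray_count A P q v = hit_count P (fun i => hp_normal (A i) q) v.
Proof.
apply: eq_card => i; rewrite !inE; congr andb.
by apply/asboolP/idP => /ray_hitsE.
Qed.

Lemma RD_le_n P : (RD A P q <= n)%N.
Proof. exact: (bigmin_le_id _ n _ (@nat_of_ord n.+1)). Qed.

Lemma RD_le_ray_count P v : v != 0 -> (RD A P q <= ray_count A P q v)%N.
Proof.
move=> v_neq0; have count_lt : (ray_count A P q v < n.+1)%N.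
  by rewrite ltnS (leq_trans (max_card _)) ?card_ord.
apply: (bigmin_le_cond _ (@nat_of_ord n.+1) (j := Ordinal count_lt)).
by apply/asboolP; exists v.
Qed.

Lemma RD_ge1 P : (0 < n)%N -> (forall v, v != 0 -> (0 < ray_count A P q v)%N) ->
  (1 <= RD A P q)%N.
Proof.
move=> n_gt0 hit; apply: (@le_bigmin _ _ _ _ (@nat_of_ord n.+1)) => // k.
by case/asboolP => v [v_neq0 <-]; apply: hit.
Qed.

Lemma HTvD_ge r (f : 'I_n -> 'I_r) : (r <= n)%N ->
  (forall j, 1 <= RD A [set i | f i == j] q)%N -> (r <= HTvD A q)%N.
Proof.
rewrite -ltnS => r_lt deep; apply: (@leq_bigmax_cond _ _ _ (Ordinal r_lt)).
by apply/asboolP; exists f.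
Qed.

End Depth.

Theorem lemma3p4 (R : realType) (d : nat) (hd : (0 < d)%N) (n : nat)
  (A : 'I_n -> hyperplane R d)
  (hA : forall i, (A i).1 != 0)
  (hdist : forall i j, i != j ->
     exists x : 'rV[R]_d, ~ (on_hp (A i) x <-> on_hp (A j) x))
  (q : 'rV[R]_d) :
  (RD A [set: 'I_n] q)%:R / d%:R <= (HTvD A q)%:R :> R.
Proof.
set k := RD A [set: 'I_n] q.
have [->|k_gt0] := posnP k; first by rewrite mul0r ler0n.
pose w i := hp_normal (A i) q; pose r := (k.-1 %/ d)%N.
have deep v : v != 0 -> (r * d < hit_count [set: 'I_n] w v)%N.
  move=> v_neq0; rewrite -ray_count_hit_count.
  by apply: leq_ltn_trans (leq_divM k.-1 d) _; rewrite prednK // RD_le_ray_count.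
have [g part_hit] := greedy_partition hd deep.
have k_le : (k <= r.+1 * d)%N by have := ltn_ceil k.-1 hd; rewrite prednK.
have r_lt_k : (r < k)%N.
  by have := leq_divM k.-1 d; have := leq_pmulr r hd; rewrite -/r; lia.
have r_HTvD : (r.+1 <= HTvD A q)%N.
  have r_le_n : (r.+1 <= n)%N := leq_trans r_lt_k (RD_le_n _ _ _).
  apply: (HTvD_ge (f := g) r_le_n) => j; apply: RD_ge1 => [|v v_neq0]; first by lia.
  by rewrite ray_count_hit_count -[[set i | g i == j]]setTI; apply: part_hit.
rewrite ler_pdivrMr ?ltr0n // -natrM ler_nat (leq_trans k_le) //.
by rewrite leq_mul2r r_HTvD orbT.
Qed.
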